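(* Let $\varepsilon\in(0,\tfrac12)$, $n\ge 0$, and let $W_n$ be the weighted diamond defined below. Then any shortest (weighted) path between two vertices of $W_n$ contains at most one edge of weight $1$, and for each $j\in\{1,\dots,n\}$ at most two edges of weight $(\tfrac12+\varepsilon)^j$.
   Context: Diamonds: $D_0$ is an edge; $D_i$ is obtained from $D_{i-1}$ by replacing each edge $uv$ by a quadrilateral $u,a,v,b$. Weighted diamonds: $W_0=D_0$ with its edge of weight $1$; for $n\ge1$, $W_n$ has vertex set $V(D_n)$ and edge set $E(W_{n-1})\cup E(D_n)$, where edges of $W_{n-1}$ keep their weights and each edge of $D_n$ gets weight $(\tfrac12+\varepsilon)^n$. The length of a path is the sum of the weights of its edges; a shortest path is one of minimal length between its endpoints. *)

From HB Require Import structures.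
From mathcomp Require Import all_boot all_order all_algebra.
Set Implicit Arguments. Unset Strict Implicit. Unset Printing Implicit Defensive.
Import Order.TTheory GRing.Theory Num.Theory.

(* An edge of D_n is encoded by a word of length n over bool*bool: the k-th *)
(* letter (side, br) says how the edge was obtained at step k: when an edge *)
(* uv of D_(k-1) (encoded by the prefix p) is replaced by the quadrilateral *)
(* u, a, v, b, the new vertex a/b is  Mid p br  (br = false: a, true: b),   *)
(* and side = false selects the edge u--(Mid p br), side = true the edge    *)
(* (Mid p br)--v.                                                           *)
(* Vertices: inl false = bottom endpoint s of D_0, inl true = top endpoint  *)
(* t of D_0, inr (p, br) = Mid p br, created at level (size p).+1.          *)

Definition word := seq (bool * bool).
Definition vertex := (bool + (word * bool))%type.

Definition vS : vertex := inl false.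
Definition vT : vertex := inl true.
Definition vMid (p : word) (br : bool) : vertex := inr (p, br).

(* vertex set of D_n (= vertex set of W_n) *)
Definition in_V (n : nat) (x : vertex) : bool :=
  match x with
  | inl _ => true
  | inr (p, _) => size p < n
  end.

Definition step (st : (vertex * vertex) * word) (c : bool * bool) :=
  let: (uv, p) := st in
  let: (u, v) := uv in
  let m := vMid p c.2 in
  ((if c.1 then (m, v) else (u, m)), rcons p c).

(* the two endpoints of the edge encoded by w (an edge of D_(size w)) *)
Definition ends (w : word) : vertex * vertex :=
  (foldl step ((vS, vT), [::]) w).1.

(* edges of W_n : all edges of D_j for j <= n *)
Definition in_E (n : nat) (e : word) : bool := size e <= n.

Local Open Scope ring_scope.
Definition weight (R : realFieldType) (eps : R) (e : word) : R :=
  (2^-1 + eps) ^+ size e.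

Local Close Scope ring_scope.
Definition incident (e : word) (x : vertex) : bool :=
  ((ends e).1 == x) || ((ends e).2 == x).

Definition other (e : word) (x : vertex) : vertex :=
  if (ends e).1 == x then (ends e).2 else (ends e).1.

Fixpoint is_walk (n : nat) (x : vertex) (es : seq word) (y : vertex) : bool :=
  match es with
  | [::] => x == y
  | e :: es' => [&& in_E n e, incident e x & is_walk n (other e x) es' y]
  end.

Fixpoint walk_verts (x : vertex) (es : seq word) : seq vertex :=
  match es with
  | [::] => [:: x]
  | e :: es' => x :: walk_verts (other e x) es'
  end.

Definition is_path (n : nat) (x : vertex) (es : seq word) (y : vertex) : bool :=
  is_walk n x es y && uniq (walk_verts x es).

Local Open Scope ring_scope.
Definition path_length (R : realFieldType) (eps : R) (es : seq word) : R :=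
  \sum_(e <- es) weight eps e.

Definition shortest_path (R : realFieldType) (eps : R) (n : nat)
    (x : vertex) (es : seq word) (y : vertex) : Prop :=
  is_path n x es y /\
  forall es', is_path n x es' y -> path_length eps es <= path_length eps es'.

From HB Require Import structures.
From mathcomp Require Import all_boot all_order all_algebra.
From mathcomp Require Import ring lra.
Set Implicit Arguments. Unset Strict Implicit. Unset Printing Implicit Defensive.
Import Order.TTheory GRing.Theory Num.Theory.

(* Shortest paths in the weighted diamond W_n, with c = 1/2 + eps.

   An edge of W_n is an edge of some D_j (a word of length j), of weight c^j;
   since 1/2 < c < 1 the weight determines j (weight_eq_power).  The only
   edge of D_0 is the word [::], and a path uses no edge twice
   (path_edge_once), which gives the bound for weight 1.

   For j = k + 1 >= 1, call low the vertices of D_k and high the others.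
   Every edge of D_(k+1) joins a low vertex to a high one (crossing_edge).
   A shortest path makes no excursion, i.e. never leaves a low vertex u,
   moves through high vertices only and comes back down to a low vertex w:
   such an excursion stays inside one cell of D_k, so u and w are the ends
   of an edge p of D_k (high_run_ends_in_cell).  Placing the diamond on
   [0, 1], where the ends of an edge of D_m are 2^-m apart (position_other),
   the excursion weighs at least 2^-k (2c)^(k+1) = 2c c^k > c^k, the weight
   of p (walk_length_lower_bound), so replacing it by p would shorten the
   path (shortest_no_excursion).  A walk without excursion switches between
   low and high at most twice (crossings_le2), hence uses at most two edges
   of D_(k+1). *)

Lemma step_word (w : word) uv p : (foldl step (uv, p) w).2 = p ++ w.
Proof.
elim: w uv p => [|c w IH] [u v] p /=; first by rewrite cats0.
by rewrite IH cat_rcons.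
Qed.

Lemma ends_rcons q c : ends (rcons q c) =
  if c.1 then (vMid q c.2, (ends q).2) else ((ends q).1, vMid q c.2).
Proof.
rewrite /ends foldl_rcons.
have := step_word q (vS, vT) [::]; case: (foldl step _ q) => [[u v] p] /= ->.
by case: c => [[] b].
Qed.

Definition level (x : vertex) : nat :=
  match x with inl _ => 0 | inr (p, _) => (size p).+1 end.

Lemma incident_mid w r b :
  incident w (vMid r b) -> r = take (size r) w /\ size r < size w.
Proof.
elim/last_ind: w => [//|q c IH].
rewrite /incident ends_rcons size_rcons -cats1.
have from_q : incident q (vMid r b) ->
    r = take (size r) (q ++ [:: c]) /\ size r < (size q).+1.
  by case/IH => Er lt; rewrite takel_cat ?(ltnW lt) // leqW.
have from_mid : vMid q c.2 = vMid r b ->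
    r = take (size r) (q ++ [:: c]) /\ size r < (size q).+1.
  by case=> <- _; rewrite takel_cat // take_size.
case: ifP => _ /orP[] /eqP /= E; first [exact: from_mid E | apply: from_q];
  by rewrite /incident E eqxx ?orbT.
Qed.

Lemma incident_level w x : incident w x -> level x <= size w.
Proof. by case: x => [//|[r b]] /incident_mid []. Qed.

Lemma ends_neq w : (ends w).1 != (ends w).2.
Proof.
case/lastP: w => [//|q c]; rewrite ends_rcons.
have fresh y : incident q y -> vMid q c.2 != y.
  by move=> hy; apply/eqP => E; move: hy; rewrite -E => /incident_mid [_]; rewrite ltnn.
by case: ifP => _ /=; [apply: fresh | rewrite eq_sym; apply: fresh];
  rewrite /incident eqxx ?orbT.
Qed.

Lemma incident_take k w x : incident w x -> level x <= k -> incident (take k w) x.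
Proof.
elim/last_ind: w => [//|q c IH].
have [hs|] := leqP (size (rcons q c)) k; first by rewrite take_oversize.
rewrite size_rcons ltnS => hs; rewrite -cats1 takel_cat // cats1 => hx hl.
apply: IH => //; move: hx; rewrite /incident ends_rcons.
case: ifP => _ /orP[] /eqP /= E; rewrite ?E ?eqxx ?orbT //;
  by move: hl; rewrite -E /= ltnNge hs.
Qed.

Lemma other_incident e x : incident e x -> incident e (other e x).
Proof. by rewrite /incident /other; case: ifP => _; rewrite eqxx ?orbT. Qed.

Lemma other_involutive e x : incident e x -> other e (other e x) = x.
Proof.
rewrite /incident /other; have := ends_neq e; case: (ends e) => a b /=.
case: (eqVneq a x) => [-> | _] /=; first by rewrite eq_sym => /negbTE ->.
by rewrite eqxx => _ /eqP.
Qed.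

Lemma incident_cases e x y : incident e x -> incident e y -> y = x \/ y = other e x.
Proof.
rewrite /incident /other; case: (ends e) => a b /=.
case: (eqVneq a x) => [-> | _] /=; first by move=> _ /orP[] /eqP <-; auto.
by move=> /eqP <- /orP[] /eqP <-; auto.
Qed.

Section Threshold.
Variable k : nat.

Definition low (x : vertex) : bool := level x <= k.

(* For a high vertex, the edge of D_k inside whose subdivided quadrilateral
   it lies. *)
Definition cell (x : vertex) : word :=
  match x with inl _ => [::] | inr (r, _) => take k r end.

Lemma high_edge_size e x : incident e x -> ~~ low x -> k < size e.
Proof.
by move/incident_level => lx; rewrite /low -ltnNge => /leq_trans; apply.
Qed.

Lemma cell_ancestor e x : incident e x -> ~~ low x -> cell x = take k e.
Proof.
case: x => [//|[r b]] /incident_mid [Er _]; rewrite /low /= -ltnNge ltnS => hk.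
by rewrite Er take_takel.
Qed.

Lemma crossing_edge e v : size e = k.+1 -> incident e v -> low v = ~~ low (other e v).
Proof.
move=> hs; have ends_split : low (ends e).1 = ~~ low (ends e).2.
  move: hs; case/lastP: e => [//|q c]; rewrite size_rcons => -[hq].
  have old_low y : incident q y -> low y.
    by move/incident_level; rewrite /low hq.
  have new_high : ~~ low (vMid q c.2) by rewrite /low /= hq ltnn.
  rewrite ends_rcons; case: ifP => _ /=.
    by rewrite (old_low (ends q).2) ?(negbTE new_high) // /incident eqxx orbT.
  by rewrite (old_low (ends q).1) ?new_high // /incident eqxx.
rewrite /incident /other; move: ends_split; case: (ends e) => a b /= ends_split.
case: (eqVneq a v) => [<- | _] /=; first by rewrite ends_split.
by move=> /eqP <-; rewrite ends_split negbK.
Qed.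

End Threshold.

Fixpoint walk_end (x : vertex) (es : seq word) : vertex :=
  if es is e :: es' then walk_end (other e x) es' else x.

Fixpoint departures (x : vertex) (es : seq word) : seq vertex :=
  if es is e :: es' then x :: departures (other e x) es' else [::].

Lemma walk_verts_cat x a b :
  walk_verts x (a ++ b) = departures x a ++ walk_verts (walk_end x a) b.
Proof. by elim: a x => [|e a IH] x //=; rewrite IH. Qed.

Lemma walk_verts_head x es : walk_verts x es = x :: behead (walk_verts x es).
Proof. by case: es. Qed.

Lemma is_walk_cat n x a b y : is_walk n x (a ++ b) y =
  is_walk n x a (walk_end x a) && is_walk n (walk_end x a) b y.
Proof.
elim: a x => [|e a IH] x /=; first by rewrite eqxx.
by rewrite IH !andbA.
Qed.

(* A path never uses the same edge twice: otherwise it would revisit an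
   endpoint of that edge. *)
Lemma path_edge_once n x es y e0 : is_path n x es y -> count (pred1 e0) es <= 1.
Proof.
case/andP; elim: es x => [//|e es IH] x /= /and3P [_ hinc hw] /andP [hx hu].
case: (eqVneq e e0) => [<- | _] /=; last exact: IH hw hu.
rewrite -[X in _ <= X]/(1 + 0) leq_add2l leqn0 eqn0Ngt -has_count.
apply/hasP => -[e1 he1 /eqP E1]; subst e1.
case/splitPr: he1 hw hu hx => a c; rewrite is_walk_cat /= walk_verts_cat /= => /andP [_ /and3P [_ hv _]] _.
have [-> | ->] := incident_cases hinc hv; rewrite mem_cat inE ?eqxx ?orbT //.
by rewrite other_involutive // walk_verts_head inE eqxx !orbT.
Qed.

Section Crossings.
Variables (k n : nat).

Let high (x : vertex) : bool := ~~ low k x.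

Definition excursion (u : vertex) (e : word) (b : seq word) : bool :=
  [&& low k u, high (other e u), all high (departures (other e u) b)
    & low k (walk_end (other e u) b)].

Definition no_excursion (x : vertex) (es : seq word) : Prop :=
  forall a e b c, es = a ++ e :: b ++ c -> ~~ excursion (walk_end x a) e b.

Lemma no_excursion_behead x e es :
  no_excursion x (e :: es) -> no_excursion (other e x) es.
Proof. by move=> H a e' b c E; apply: (H (e :: a) e' b c); rewrite E. Qed.

Lemma high_walk_no_crossing es z y : is_walk n z es y ->
  all high (walk_verts z es) -> count (fun e => size e == k.+1) es = 0.
Proof.
elim: es z => [//|e es IH] z /= /and3P [_ hz hw] /andP [h1 h2].
rewrite (IH _ hw h2) addn0; apply/eqP; rewrite eqb0; apply/eqP => hs.
move: h2; rewrite walk_verts_head /= => /andP [h3 _].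
by move: h1 h3; rewrite /high (crossing_edge hs hz); case: (low k _).
Qed.

Lemma first_low_visit es z : high z -> ~~ all high (walk_verts z es) ->
  exists b c, es = b ++ c /\ all high (departures z b) /\ low k (walk_end z b).
Proof.
elim: es z => [|e es IH] z hz /=; rewrite hz //=.
case hl: (low k (other e z)).
  by move=> _; exists [:: e], es; rewrite /= hz hl.
case/(IH _ (negbT hl)) => b [c [-> [hb hend]]].
by exists (e :: b), c; rewrite /= hz hb hend.
Qed.

(* From a low vertex, a walk without excursion crosses at most once: once it
   goes up it can never come back down. *)
Lemma crossings_from_low es u y : low k u -> is_walk n u es y ->
  no_excursion u es -> count (fun e => size e == k.+1) es <= 1.
Proof.
elim: es u => [//|e es IH] u /= hu /and3P [_ hinc hw] hne.
case hv: (low k (other e u)).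
  have -> : (size e == k.+1) = false.
    by apply/negbTE/eqP => hs; move: (crossing_edge hs hinc); rewrite hu hv.
  exact: IH hv hw (no_excursion_behead hne).
have [hall | ] := boolP (all high (walk_verts (other e u) es)).
  by rewrite (high_walk_no_crossing hw hall) addn0 leq_b1.
case/(first_low_visit (negbT hv)) => b [c [Ees [hb hend]]].
by case/negP: (hne [::] e b c (congr1 _ Ees)); rewrite /excursion hu hb hend /high hv.
Qed.

(* Hence a walk without excursion uses at most two edges of D_(k+1): possibly
   one going down to the low part, then at most one going up. *)
Lemma crossings_le2 es x y : is_walk n x es y ->
  no_excursion x es -> count (fun e => size e == k.+1) es <= 2.
Proof.
elim: es x => [//|e es IH] x hw hne.
have hne' := no_excursion_behead hne.
case hx: (low k x); first exact: leq_trans (crossings_from_low hx hw hne) _.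
move: hw => /= /and3P [_ hinc hw].
case hv: (low k (other e x)).
  by apply: leq_add (leq_b1 _) (crossings_from_low hv hw hne').
have -> : (size e == k.+1) = false.
  by apply/negbTE/eqP => hs; move: (crossing_edge hs hinc); rewrite hx hv.
exact: IH hw hne'.
Qed.

Lemma high_run_ends_in_cell b z w : high z -> is_walk n z b w ->
  all high (departures z b) -> low k (walk_end z b) -> incident (cell k z) (walk_end z b).
Proof.
elim: b z => [|e b IH] z hz /=; first by rewrite (negbTE hz).
case/and3P => _ hinc hw /andP [_ hb] hend; rewrite (cell_ancestor hinc hz).
case: b IH hw hb hend => [|e2 b] IH hw hb hend.
  by apply: incident_take => //; apply: other_incident.
move: (hb) => /= /andP [hz2 _].
by rewrite -(cell_ancestor (other_incident hinc) hz2); apply: IH.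
Qed.

Lemma high_run_edges b z w : is_walk n z b w ->
  all high (departures z b) -> all (fun e => k < size e) b.
Proof.
elim: b z => [//|e b IH] z /= /and3P [_ hinc hw] /andP [hz hb].
by rewrite (high_edge_size hinc hz) (IH _ hw hb).
Qed.

End Crossings.

Local Open Scope ring_scope.

Section Geometry.
Variable R : realFieldType.

(* Embed the diamond in [0, 1]: s at 0, t at 1, each edge of D_j spans a
   dyadic interval of length 2^-j and its middle vertices sit at its centre. *)
Definition edge_interval (w : word) : R * R :=
  foldl (fun st c => let m := (st.1 + st.2) / 2 in
          if c.1 then (m, st.2) else (st.1, m)) (0, 1) w.

Definition position (x : vertex) : R :=
  match x with
  | inl b => if b then 1 else 0
  | inr (p, _) => ((edge_interval p).1 + (edge_interval p).2) / 2
  end.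

Lemma position_ends w :
  position (ends w).1 = (edge_interval w).1 /\ position (ends w).2 = (edge_interval w).2.
Proof.
elim/last_ind: w => [//|q c [IH1 IH2]].
rewrite ends_rcons /edge_interval foldl_rcons -/(edge_interval q).
by case: c => [[] b] /=; rewrite ?IH1 ?IH2.
Qed.

Lemma edge_interval_length w : (edge_interval w).2 - (edge_interval w).1 = 2^-1 ^+ size w.
Proof.
elim/last_ind: w => [|q c IH] /=; first by rewrite subr0 expr0.
rewrite /edge_interval foldl_rcons -/(edge_interval q) size_rcons exprSr -IH.
by case: c => [[] b] /=; field.
Qed.

Lemma position_other e v : incident e v ->
  `|position (other e v) - position v| = 2^-1 ^+ size e.
Proof.
have [h1 h2] := position_ends e; have hd := edge_interval_length e.
have hp : 0 <= 2^-1 ^+ size e :> R by rewrite exprn_ge0 // invr_ge0.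
rewrite /incident /other; case: (eqVneq (ends e).1 v) => [<- | _] /=.
  by rewrite h1 h2 hd ger0_norm.
by move=> /eqP <-; rewrite h1 h2 -opprB hd normrN ger0_norm.
Qed.

Lemma weight_vs_span (c : R) k m : 1 < 2 * c -> (k < m)%N ->
  2^-1 ^+ m * (2 * c) ^+ k.+1 <= c ^+ m.
Proof.
move=> hc hkm.
have -> : c ^+ m = 2^-1 ^+ m * (2 * c) ^+ m.
  by rewrite -exprMn mulrA mulVf ?mul1r // pnatr_eq0.
by rewrite ler_wpM2l ?exprn_ge0 ?invr_ge0 // ler_eXn2l.
Qed.

Lemma walk_length_lower_bound (eps : R) n k es v w : 0 < eps ->
  is_walk n v es w -> all (fun e => (k < size e)%N) es ->
  `|position w - position v| * (2 * (2^-1 + eps)) ^+ k.+1 <= path_length eps es.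
Proof.
move=> he; elim: es v => [|e es IH] v /=.
  by move/eqP => ->; rewrite subrr normr0 mul0r /path_length big_nil.
case/and3P => _ hinc hw /andP [hk hall].
rewrite /path_length big_cons -/(path_length eps es).
have hc : 1 < 2 * (2^-1 + eps) by rewrite mulrDr mulfV ?pnatr_eq0 //; lra.
set u := other e v.
apply: le_trans (_ : (`|position w - position u| + `|position u - position v|)
                      * (2 * (2^-1 + eps)) ^+ k.+1 <= _).
  rewrite ler_wpM2r ?exprn_ge0 //; first lra.
  by rewrite (le_trans _ (ler_normD _ _)) // addrA subrK.
rewrite mulrDl addrC lerD ?IH // position_other //.
exact: weight_vs_span.
Qed.

End Geometry.

Lemma path_segment_ends_neq n x a e s c y : is_path n x (a ++ (e :: s) ++ c) y ->
  walk_end x a != walk_end (walk_end x a) (e :: s).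
Proof.
rewrite /is_path !walk_verts_cat => /andP [_].
rewrite cat_uniq => /and3P [_ _]; rewrite cat_uniq /= => /and3P [_ + _].
by apply: contraNneq => <-; rewrite walk_verts_head /= mem_head.
Qed.

Lemma path_shortcut n x a e s c y p : is_path n x (a ++ (e :: s) ++ c) y ->
  in_E n p -> incident p (walk_end x a) ->
  other p (walk_end x a) = walk_end (walk_end x a) (e :: s) ->
  is_path n x (a ++ p :: c) y.
Proof.
set u := walk_end x a; set w := walk_end u (e :: s).
rewrite /is_path !is_walk_cat -/u -/w !walk_verts_cat -/u -/w.
case/andP => /and3P [hwa _ hwc] hu hE hpu hop.
rewrite hwa /= hE hpu hop hwc /=.
apply: subseq_uniq hu; rewrite cat_subseq //= eqxx.
exact: suffix_subseq.
Qed.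

(* The single edge of D_k joining the ends of a walk through D_m, m > k, is
   strictly shorter than that walk: its weight c^k is less than 2c * c^k. *)
Lemma shortcut_shorter (R : realFieldType) (eps : R) n k u s w p : 0 < eps ->
  is_walk n u s w -> all (fun e => (k < size e)%N) s ->
  size p = k -> incident p u -> other p u = w -> weight eps p < path_length eps s.
Proof.
move=> he hw hs hp hpu hop; apply: lt_le_trans (walk_length_lower_bound he hw hs).
rewrite -hop position_other // /weight hp exprS mulrCA -exprMn mulrA.
rewrite mulVf ?pnatr_eq0 // mul1r -[X in X < _]mul1r ltr_pM2r ?exprn_gt0 //; last lra.
by rewrite mulrDr mulfV ?pnatr_eq0 //; lra.
Qed.

(* A shortest path of W_n makes no excursion above any level k <= n: the
   excursion could be replaced by the edge of D_k joining its ends. *)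
Lemma shortest_no_excursion (R : realFieldType) (eps : R) n k x es y :
  0 < eps -> (k <= n)%N -> shortest_path eps n x es y -> no_excursion k x es.
Proof.
move=> he hkn [hpath hmin] a e b c Ees.
have hpath' : is_path n x (a ++ (e :: b) ++ c) y by rewrite -Ees.
set u := walk_end x a in hpath' *; set z := other e u; set w := walk_end z b.
apply/negP => /and4P [hu hz hb hw].
have hwe : is_walk n u (e :: b) w.
  by case/andP: hpath'; rewrite !is_walk_cat => /and3P [].
have /= /and3P [_ heu hwb] := hwe.
have hez : incident e z by apply: other_incident.
set p := cell k z.
have hp : p = take k e by apply: cell_ancestor.
have hpu : incident p u by rewrite hp; apply: incident_take.
have hpw : incident p w by apply: high_run_ends_in_cell hz hwb hb hw.
have hop : other p u = w.
  case: (incident_cases hpu hpw) => // E.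
  by move: (path_segment_ends_neq hpath'); rewrite /= -/z -/w E eqxx.
have hke : (k < size e)%N by apply: high_edge_size hez hz.
have hsize : size p = k by rewrite hp size_takel // ltnW.
have hnew := path_shortcut hpath' (leq_trans (eq_leq hsize) hkn) hpu hop.
have hall : all (fun e => (k < size e)%N) (e :: b).
  by rewrite /= hke (high_run_edges hwb hb).
have := shortcut_shorter he hwe hall hsize hpu hop.
have := hmin _ hnew; rewrite Ees /path_length !big_cat !big_cons big_cat /=.
lra.
Qed.

(* For 0 < eps < 1/2, c = 1/2 + eps lies strictly between 1/2 and 1, so the
   weight c^j of an edge of D_j determines its level j. *)
Lemma weight_eq_power (R : realFieldType) (eps : R) e j : 0 < eps -> eps < 2^-1 ->
  (weight eps e == (2^-1 + eps) ^+ j) = (size e == j).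
Proof.
move=> he he2; rewrite /weight; apply/eqP/eqP => [|-> //].
by apply: ieexprIn; [lra | apply/negP => /eqP; lra].
Qed.

Unset Implicit Arguments.
Theorem claimC (R : realFieldType) (eps : R) (n : nat) (x y : vertex)
    (es : seq word) :
  0 < eps -> eps < 2^-1 ->
  in_V n x -> in_V n y ->
  shortest_path eps n x es y ->
  (count (fun e => weight eps e == 1%R) es <= 1)%N /\
  (forall j : nat, (1 <= j <= n)%N ->
     (count (fun e => weight eps e == ((2^-1 + eps) ^+ j)%R) es <= 2)%N).
Proof.
move=> he he2 _ _ hsp; have [hpath _] := hsp; split.
  (* weight 1 is the edge s--t of D_0, used at most once by a path *)
  rewrite (eq_count (a2 := pred1 [::])); first exact: path_edge_once hpath.
  by move=> e; rewrite -(expr0 (2^-1 + eps)) weight_eq_power // size_eq0.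
(* weight c^j means level j; edges of D_j cross the boundary of D_(j-1) *)
case=> [//|k] /andP [_ hkn].
rewrite (eq_count (a2 := fun e => size e == k.+1)) => [|e]; last exact: weight_eq_power.
have /andP [hwalk _] := hpath.
exact: crossings_le2 hwalk (shortest_no_excursion he (ltnW hkn) hsp).
Qed.
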